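(* For a morphism $F:\mathcal C\to\mathcal D$ of cylinder categories, the following are equivalent: (1) $F$ is homotopy fully faithful; (2) for every object $A$ of $\mathcal C$, the functor $hF_A:h\mathcal C(A)\to h\mathcal D(F(A))$ is full; (3) for every object $A$ of $\mathcal C$, the morphism $F_A:\mathcal C(A)\to\mathcal D(F(A))$ is homotopy fully faithful; (4) for every object $A$ of $\mathcal C$, $hF_A:h\mathcal C(A)\to h\mathcal D(F(A))$ is fully faithful.
   Context: A cylinder category is a category $\mathcal C$ with two classes of morphisms, the cofibrations and the weak equivalences (morphisms in both classes are called trivial cofibrations), such that: (1) both classes contain all isomorphisms and are closed under composition; (2) weak equivalences satisfy 2-out-of-6: if $f,g,h$ are composable and $f\circ g$, $g\circ h$ are weak equivalences then $f,g,h,f\circ g\circ h$ are; (3) $\mathcal C$ has an initial object $0$ and every $0\to X$ is a cofibration; (4) pushouts of cofibrations along arbitrary maps exist and are cofibrations; (5) pushouts of trivial cofibrations are trivial cofibrations; (6) for every object $X$ the codiagonal $X\sqcup X\to X$ factors as a cofibration $X\sqcup X\hookrightarrow IX$ followed by a weak equivalence $IX\to X$; (7) every trivial cofibration admits a retraction. A morphism of cylinder categories is a functor preserving cofibrations, weak equivalences, the initial object and pushouts along cofibrations. For a cofibration $A\hookrightarrow B$, a relative cylinder object is a factorization $B\sqcup_A B\hookrightarrow I_AB\xrightarrow{\sim}B$ of the codiagonal into a cofibration followed by a weak equivalence. Two maps $f,g:B\to X$ with $f|_A=g|_A$ are homotopic relative to $A$, written $f\sim_A g$, if $(f,g):B\sqcup_AB\to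 X$ extends to $I_AB\to X$ for some relative cylinder object; homotopy $f\sim g$ is the case $A=0$. $h\mathcal C$ denotes the homotopy category: same objects as $\mathcal C$, morphisms the homotopy classes of morphisms (this is a category and is the localization of $\mathcal C$ at weak equivalences). For an object $A$, $\mathcal C(A)$ is the category whose objects are cofibrations $A\hookrightarrow B$ and morphisms commutative triangles under $A$, with cofibrations and weak equivalences those of $\mathcal C$; it is a cylinder category. A morphism $F$ induces a morphism $F_A:\mathcal C(A)\to\mathcal D(F(A))$ and a functor $hF_A$ on homotopy categories. $F$ is homotopy fully faithful if for every cofibration $i:A\hookrightarrow B$ in $\mathcal C$, every arrow $x:A\to X$ in $\mathcal C$, and every $v:F(B)\to F(X)$ in $\mathcal D$ with $v\circ F(i)=F(x)$, there is $v':B\to X$ in $\mathcal C$ with $v'\circ i=x$ and $F(v')\sim_{F(A)} v$. *)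

From Stdlib Require Import ProofIrrelevance.
Set Implicit Arguments.
Unset Strict Implicit.

Record Category := {
  Ob :> Type;
  Hom : Ob -> Ob -> Type;
  idm : forall X, Hom X X;
  cmp : forall X Y Z, Hom Y Z -> Hom X Y -> Hom X Z;
  cmp_id_l : forall X Y (f : Hom X Y), cmp (idm Y) f = f;
  cmp_id_r : forall X Y (f : Hom X Y), cmp f (idm X) = f;
  cmp_assoc : forall X Y Z W (h : Hom Z W) (g : Hom Y Z) (f : Hom X Y),
      cmp h (cmp g f) = cmp (cmp h g) f
}.
Arguments idm {C} X : rename.
Arguments cmp {C X Y Z} g f : rename.
Arguments Hom {C} X Y : rename.

Record Functor (C D : Category) := {
  fobj :> Ob C -> Ob D;
  fmap : forall X Y, Hom X Y -> Hom (fobj X) (fobj Y);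
  fmap_id : forall X, fmap (idm X) = idm (fobj X);
  fmap_cmp : forall X Y Z (g : Hom Y Z) (f : Hom X Y),
      fmap (cmp g f) = cmp (fmap g) (fmap f)
}.
Arguments fmap {C D} F {X Y} f : rename.

Section CatNotions.
Context {C : Category}.

Definition is_iso {X Y : Ob C} (f : Hom X Y) : Prop :=
  exists g : Hom Y X, cmp g f = idm X /\ cmp f g = idm Y.

Definition is_initial (O : Ob C) : Prop :=
  forall X : Ob C, exists f : Hom O X, forall g : Hom O X, g = f.

(* The square  A --f--> X
               |i       |j
               B --g--> P   is a pushout (j is the pushout of i along f). *)
Definition is_pushout {A B X P : Ob C} (i : Hom A B) (f : Hom A X)
    (j : Hom X P) (g : Hom B P) : Prop :=
  cmp j f = cmp g i /\
  forall (Q : Ob C) (u : Hom X Q) (w : Hom B Q), cmp u f = cmp w i ->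
    exists h : Hom P Q, cmp h j = u /\ cmp h g = w /\
      forall h' : Hom P Q, cmp h' j = u -> cmp h' g = w -> h' = h.

Definition is_coproduct {X Y P : Ob C} (in1 : Hom X P) (in2 : Hom Y P) : Prop :=
  forall (Q : Ob C) (u : Hom X Q) (w : Hom Y Q),
    exists h : Hom P Q, cmp h in1 = u /\ cmp h in2 = w /\
      forall h' : Hom P Q, cmp h' in1 = u -> cmp h' in2 = w -> h' = h.
End CatNotions.

Record CofWeCat := {
  cwc :> Category;
  cof : forall X Y : Ob cwc, Hom X Y -> Prop;
  weq : forall X Y : Ob cwc, Hom X Y -> Prop
}.
Arguments cof {c X Y} f : rename.
Arguments weq {c X Y} f : rename.

Section Homotopy.
Context {C : CofWeCat}.

(* f ~_A g for (i : A -> B): (f,g) : B ⊔_A B -> X extends along a relative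
   cylinder object  B ⊔_A B >--c--> I --s-->~ B  factoring the codiagonal. *)
Definition rel_htpy {A B X : Ob C} (i : Hom A B) (f g : Hom B X) : Prop :=
  cmp f i = cmp g i /\
  exists (P : Ob C) (in1 in2 : Hom B P) (I : Ob C) (c : Hom P I) (s : Hom I B)
         (H : Hom I X),
    is_pushout i i in1 in2 /\ cof c /\ weq s /\
    cmp s (cmp c in1) = idm B /\ cmp s (cmp c in2) = idm B /\
    cmp H (cmp c in1) = f /\ cmp H (cmp c in2) = g.

Definition htpy {B X : Ob C} (f g : Hom B X) : Prop :=
  exists (O : Ob C) (o : Hom O B), is_initial O /\ rel_htpy o f g.
End Homotopy.

Record CylCat := {
  cyl :> CofWeCat;
  cof_iso : forall (X Y : Ob cyl) (f : Hom X Y), is_iso f -> cof f;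
  weq_iso : forall (X Y : Ob cyl) (f : Hom X Y), is_iso f -> weq f;
  cof_cmp : forall (X Y Z : Ob cyl) (g : Hom Y Z) (f : Hom X Y),
      cof f -> cof g -> cof (cmp g f);
  weq_cmp : forall (X Y Z : Ob cyl) (g : Hom Y Z) (f : Hom X Y),
      weq f -> weq g -> weq (cmp g f);
  weq_2of6 : forall (W X Y Z : Ob cyl) (h : Hom W X) (g : Hom X Y) (f : Hom Y Z),
      weq (cmp f g) -> weq (cmp g h) ->
      weq f /\ weq g /\ weq h /\ weq (cmp f (cmp g h));
  initial_ex : exists O : Ob cyl, is_initial O /\
      forall (X : Ob cyl) (f : Hom O X), cof f;
  pushout_ex : forall (A B X : Ob cyl) (i : Hom A B) (f : Hom A X), cof i ->
      exists (P : Ob cyl) (j : Hom X P) (g : Hom B P), is_pushout i f j g;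
  pushout_cof : forall (A B X P : Ob cyl) (i : Hom A B) (f : Hom A X)
      (j : Hom X P) (g : Hom B P), cof i -> is_pushout i f j g -> cof j;
  pushout_tcof : forall (A B X P : Ob cyl) (i : Hom A B) (f : Hom A X)
      (j : Hom X P) (g : Hom B P), cof i -> weq i -> is_pushout i f j g ->
      weq j;
  cylinder_ex : forall X : Ob cyl,
      exists (P : Ob cyl) (in1 in2 : Hom X P) (I : Ob cyl) (c : Hom P I)
             (s : Hom I X),
        is_coproduct in1 in2 /\ cof c /\ weq s /\
        cmp s (cmp c in1) = idm X /\ cmp s (cmp c in2) = idm X;
  tcof_retract : forall (X Y : Ob cyl) (f : Hom X Y), cof f -> weq f ->
      exists r : Hom Y X, cmp r f = idm X
}.

Record CylMor (C D : CylCat) := {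
  cfun :> Functor C D;
  pres_cof : forall (X Y : Ob C) (f : Hom X Y), cof f -> cof (fmap cfun f);
  pres_weq : forall (X Y : Ob C) (f : Hom X Y), weq f -> weq (fmap cfun f);
  pres_initial : forall O : Ob C, is_initial O -> is_initial (cfun O);
  pres_pushout : forall (A B X P : Ob C) (i : Hom A B) (f : Hom A X)
      (j : Hom X P) (g : Hom B P), cof i -> is_pushout i f j g ->
      is_pushout (fmap cfun i) (fmap cfun f) (fmap cfun j) (fmap cfun g)
}.

Section Coslice.
Variables (C : CofWeCat) (A : Ob C).

Record CsOb := { cs_tgt : Ob C; cs_str : Hom A cs_tgt; cs_cof : cof cs_str }.
Record CsHom (X Y : CsOb) : Type := {
  cs_mor : Hom (cs_tgt X) (cs_tgt Y);
  cs_comm : cmp cs_mor (cs_str X) = cs_str Y }.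

Lemma CsHom_eq (X Y : CsOb) (f g : CsHom X Y) : cs_mor f = cs_mor g -> f = g.
Proof.
  destruct f as [f Hf], g as [g Hg]; simpl; intros ->.
  f_equal; apply proof_irrelevance.
Qed.

Definition cs_id (X : CsOb) : CsHom X X :=
  {| cs_mor := idm (cs_tgt X); cs_comm := cmp_id_l (cs_str X) |}.

Lemma cs_cmp_comm (X Y Z : CsOb) (g : CsHom Y Z) (f : CsHom X Y) :
  cmp (cmp (cs_mor g) (cs_mor f)) (cs_str X) = cs_str Z.
Proof. rewrite <- cmp_assoc, (cs_comm f), (cs_comm g); reflexivity. Qed.

Definition cs_cmp (X Y Z : CsOb) (g : CsHom Y Z) (f : CsHom X Y) : CsHom X Z :=
  {| cs_mor := cmp (cs_mor g) (cs_mor f); cs_comm := cs_cmp_comm g f |}.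

Definition coslice_cat : Category.
Proof.
  refine {| Ob := CsOb; Hom := CsHom; idm := cs_id; cmp := cs_cmp |};
  intros; apply CsHom_eq; simpl;
  [apply cmp_id_l | apply cmp_id_r | apply cmp_assoc].
Defined.

Definition coslice : CofWeCat :=
  {| cwc := coslice_cat;
     cof := fun X Y (f : CsHom X Y) => cof (cs_mor f);
     weq := fun X Y (f : CsHom X Y) => weq (cs_mor f) |}.
End Coslice.
Arguments CsOb : clear implicits.
Arguments CsHom : clear implicits.
Arguments coslice : clear implicits.
Arguments coslice_cat : clear implicits.

Section InducedCoslice.
Variables (C D : CylCat) (F : CylMor C D) (A : Ob C).

Definition FA_obj (X : CsOb C A) : CsOb D (F A) :=
  {| cs_tgt := F (cs_tgt X); cs_str := fmap F (cs_str X);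
     cs_cof := pres_cof F (cs_cof X) |}.

Lemma FA_comm (X Y : CsOb C A) (f : CsHom C A X Y) :
  cmp (fmap F (cs_mor f)) (cs_str (FA_obj X)) = cs_str (FA_obj Y).
Proof. simpl; rewrite <- fmap_cmp, (cs_comm f); reflexivity. Qed.

Definition FA_map (X Y : CsOb C A) (f : CsHom C A X Y) : CsHom D (F A) (FA_obj X) (FA_obj Y) :=
  @Build_CsHom D (F A) (FA_obj X) (FA_obj Y) (fmap F (cs_mor f)) (FA_comm f).

Definition F_A : Functor (coslice C A) (coslice D (F A)).
Proof.
  refine (@Build_Functor (coslice C A) (coslice D (F A))
            (FA_obj : Ob (coslice C A) -> Ob (coslice D (F A)))
            (FA_map : forall X Y, Hom (C:=coslice C A) X Y -> Hom (C:=coslice D (F A)) (FA_obj X) (FA_obj Y)) _ _);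
  intros; apply CsHom_eq; simpl; [apply fmap_id | apply fmap_cmp].
Defined.
End InducedCoslice.

Section FFNotions.
Variables (C D : CofWeCat) (G : Functor C D).

Definition htpy_fully_faithful : Prop :=
  forall (A B X : Ob C) (i : Hom A B) (x : Hom A X) (v : Hom (G B) (G X)),
    cof i -> cmp v (fmap G i) = fmap G x ->
    exists v' : Hom B X, cmp v' i = x /\ rel_htpy (fmap G i) (fmap G v') v.

(* hG : hC -> hD is full: every homotopy class of maps G X -> G Y
   is the class of some G f, i.e. G f ~ v. *)
Definition h_full : Prop :=
  forall (X Y : Ob C) (v : Hom (G X) (G Y)), exists f : Hom X Y, htpy (fmap G f) v.

(* hG is faithful: [G f] = [G g] implies [f] = [g]. *)
Definition h_faithful : Prop :=
  forall (X Y : Ob C) (f g : Hom X Y), htpy (fmap G f) (fmap G g) -> htpy f g.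
End FFNotions.


(* Homotopy relative to A in C coincides with homotopy in the coslice C(A), and a relative
   homotopy can be realised on any relative cylinder, in particular on the image under F of a
   relative cylinder of C.  (1) => (3): a lift in C of a map under F A is automatically under A.
   (3) => (2): apply (3) to the initial object A of C(A).  (2) => (1): v : F B -> F X extending
   F x amounts to a retraction F P -> F X of F X -> F P, with P = B +_A X; fullness of hF_X
   gives a map P -> X under X homotopic to it, and restricting along B -> P yields the lift.
   (1) => faithfulness: a homotopy F f ~ F g relative to F A, realised on F (I_A B), is lifted
   along the cofibration B +_A B -> I_A B to a homotopy f ~ g relative to A. *)

Section CategoryFacts.
Context {K : Category}.

Lemma is_iso_idm (X : Ob K) : is_iso (idm X).
Proof. exists (idm X); rewrite cmp_id_l; auto. Qed.

Lemma initial_hom_unique {O X : Ob K} : is_initial O -> forall f g : Hom O X, f = g.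
Proof. intros HO f g; destruct (HO X) as [h Hh]; rewrite (Hh f), (Hh g); reflexivity. Qed.

Lemma pushout_hom_ext {A B X P Q : Ob K} {i : Hom A B} {f : Hom A X} {j : Hom X P}
  {g : Hom B P} {h1 h2 : Hom P Q} :
  is_pushout i f j g -> cmp h1 j = cmp h2 j -> cmp h1 g = cmp h2 g -> h1 = h2.
Proof.
  intros [Hc Hu] E1 E2.
  destruct (Hu Q (cmp h1 j) (cmp h1 g)) as [h [_ [_ Hh]]].
  { rewrite <- !cmp_assoc, Hc; reflexivity. }
  rewrite (Hh h1), (Hh h2); auto.
Qed.

Lemma coproduct_hom_ext {X Y P Q : Ob K} {in1 : Hom X P} {in2 : Hom Y P} {h1 h2 : Hom P Q} :
  is_coproduct in1 in2 -> cmp h1 in1 = cmp h2 in1 -> cmp h1 in2 = cmp h2 in2 -> h1 = h2.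
Proof.
  intros Hu E1 E2.
  destruct (Hu Q (cmp h1 in1) (cmp h1 in2)) as [h [_ [_ Hh]]].
  rewrite (Hh h1), (Hh h2); auto.
Qed.

Lemma coproduct_sym {X Y P : Ob K} {in1 : Hom X P} {in2 : Hom Y P} :
  is_coproduct in1 in2 -> is_coproduct in2 in1.
Proof.
  intros Hc Q u w. destruct (Hc Q w u) as [h [H1 [H2 Hh]]].
  exists h; repeat split; auto.
Qed.

Lemma coproduct_unique_iso {X Y P P' : Ob K} {in1 : Hom X P} {in2 : Hom Y P}
  {in1' : Hom X P'} {in2' : Hom Y P'} :
  is_coproduct in1 in2 -> is_coproduct in1' in2' ->
  exists h : Hom P P', is_iso h /\ cmp h in1 = in1' /\ cmp h in2 = in2'.
Proof.
  intros Hc Hc'.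
  destruct (Hc P' in1' in2') as [h [H1 [H2 _]]].
  destruct (Hc' P in1 in2) as [h' [H1' [H2' _]]].
  exists h; split; [exists h'; split|]; auto.
  - apply (coproduct_hom_ext Hc); rewrite <- cmp_assoc, cmp_id_l;
      [rewrite H1, H1'|rewrite H2, H2']; reflexivity.
  - apply (coproduct_hom_ext Hc'); rewrite <- cmp_assoc, cmp_id_l;
      [rewrite H1', H1|rewrite H2', H2]; reflexivity.
Qed.

Lemma pushout_initial_coproduct {O X Y P : Ob K} {i : Hom O Y} {f : Hom O X}
  {j : Hom X P} {g : Hom Y P} :
  is_initial O -> is_pushout i f j g -> is_coproduct j g.
Proof.
  intros HO [_ Hu] Q u w.
  apply Hu; apply (initial_hom_unique HO).
Qed.

Lemma coproduct_pushout {X1 X2 Y P Q : Ob K} {in1 : Hom X1 P} {in2 : Hom X2 P}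
  {a : Hom X1 Q} {b : Hom Y Q} (f : Hom X2 Y) (phi : Hom P Q) :
  is_coproduct in1 in2 -> is_coproduct a b ->
  cmp phi in1 = a -> cmp phi in2 = cmp b f -> is_pushout in2 f b phi.
Proof.
  intros Hc Hab E1 E2. split; [symmetry; exact E2|].
  intros R u w Huw.
  destruct (Hab R (cmp w in1) u) as [h [H1 [H2 Hh]]].
  assert (Hphi : cmp h phi = w).
  { apply (coproduct_hom_ext Hc); rewrite <- cmp_assoc.
    - rewrite E1; exact H1.
    - rewrite E2, cmp_assoc, H2; exact Huw. }
  exists h; split; [exact H2|]; split; [exact Hphi|].
  intros h' H1' H2'. apply Hh; auto.
  rewrite <- E1, cmp_assoc, H2'; reflexivity.
Qed.

Lemma pushout_pasting {A B B' X P P' : Ob K} {i : Hom A B} {f : Hom A X} {j : Hom X P}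
  {g : Hom B P} {k : Hom B B'} {j' : Hom P P'} {g' : Hom B' P'} :
  is_pushout i f j g -> is_pushout k g j' g' -> is_pushout (cmp k i) f (cmp j' j) g'.
Proof.
  intros [Hc1 Hu1] [Hc2 Hu2]. split.
  { rewrite <- !cmp_assoc, Hc1, !cmp_assoc, Hc2; reflexivity. }
  intros Q u w Huw.
  destruct (Hu1 Q u (cmp w k)) as [h1 [E1 [F1 U1]]]; [rewrite Huw, cmp_assoc; reflexivity|].
  destruct (Hu2 Q h1 w F1) as [h2 [E2 [F2 U2]]].
  exists h2; split; [rewrite cmp_assoc, E2; exact E1|]; split; [exact F2|].
  intros h' G1 G2. apply U2; auto.
  apply U1; rewrite <- cmp_assoc; auto.
  rewrite Hc2, cmp_assoc, G2; reflexivity.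
Qed.

End CategoryFacts.

Section CylinderFacts.
Variable C : CylCat.

Lemma weq_idm (X : Ob C) : weq (idm X).
Proof. apply weq_iso, is_iso_idm. Qed.

Lemma weq_from_cmp_l {X Y Z : Ob C} (g : Hom Y Z) (f : Hom X Y) :
  weq g -> weq (cmp g f) -> weq f.
Proof.
  intros Hg Hgf. apply (weq_2of6 (h:=f) (g:=g) (f:=idm Z)); auto.
  rewrite cmp_id_l; auto.
Qed.

Lemma weq_from_cmp_r {X Y Z : Ob C} (g : Hom Y Z) (f : Hom X Y) :
  weq f -> weq (cmp g f) -> weq g.
Proof.
  intros Hf Hgf. apply (weq_2of6 (h:=idm X) (g:=f) (f:=g)); auto.
  rewrite cmp_id_r; auto.
Qed.

Lemma coproduct_inr_cof {X Y P : Ob C} {in1 : Hom X P} {in2 : Hom Y P} :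
  is_coproduct in1 in2 -> cof in2.
Proof.
  intros Hc. destruct (initial_ex C) as [O [HO HOcof]].
  destruct (HO X) as [oX _], (HO Y) as [oY _].
  destruct (pushout_ex (i:=oX) oY (HOcof _ _)) as [P' [j [g Hpo]]].
  destruct (coproduct_unique_iso (coproduct_sym (pushout_initial_coproduct HO Hpo)) Hc)
    as [h [Hiso [_ Hj]]].
  rewrite <- Hj. apply cof_cmp; [eapply pushout_cof; eauto | apply cof_iso; exact Hiso].
Qed.

(* The mapping cylinder: X -> (X + Y) +_{X + X} I X -> Y, where I X is a cylinder of X;
   Y -> (X + Y) +_{X + X} I X is a pushout of the trivial cofibration X -> I X along f. *)
Lemma factor_cof_weq {X Y : Ob C} (f : Hom X Y) :
  exists (M : Ob C) (k : Hom X M) (w : Hom M Y), cof k /\ weq w /\ cmp w k = f.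
Proof.
  destruct (cylinder_ex X) as [P [in1 [in2 [I [c [s [Hcop [Hc [Hs [E1 E2]]]]]]]]]].
  destruct (initial_ex C) as [O [HO HOcof]].
  destruct (HO X) as [oX _], (HO Y) as [oY _].
  destruct (pushout_ex (i:=oY) oX (HOcof _ _)) as [XY [inX [inY HpoXY]]].
  pose proof (pushout_initial_coproduct HO HpoXY) as HcXY.
  destruct (Hcop XY inX (cmp inY f)) as [phi [Phi1 [Phi2 _]]].
  destruct (pushout_ex (i:=c) phi Hc) as [M [jM [gM HpoM]]].
  destruct (HcXY Y f (idm Y)) as [fid [Fid1 [Fid2 _]]].
  destruct (proj2 HpoM Y fid (cmp f s)) as [w [W1 [W2 _]]].
  { apply (coproduct_hom_ext Hcop); rewrite <- !cmp_assoc.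
    - rewrite Phi1, Fid1, E1, cmp_id_r; reflexivity.
    - rewrite Phi2, cmp_assoc, Fid2, cmp_id_l, E2, cmp_id_r; reflexivity. }
  exists M, (cmp jM inX), w. split; [|split].
  - apply cof_cmp; [exact (pushout_cof (HOcof _ _) HpoXY) | exact (pushout_cof Hc HpoM)].
  - assert (Hpo : is_pushout (cmp c in2) f (cmp jM inY) gM).
    { apply (pushout_pasting (coproduct_pushout f phi Hcop HcXY Phi1 Phi2) HpoM). }
    assert (Hc2 : cof (cmp c in2)) by (apply cof_cmp; [eapply coproduct_inr_cof|]; eauto).
    assert (Hw2 : weq (cmp c in2)) by (apply (weq_from_cmp_l s); rewrite ?E2; auto using weq_idm).
    apply (weq_from_cmp_r w (cmp jM inY)).
    + apply (pushout_tcof Hc2 Hw2 Hpo).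
    + rewrite cmp_assoc, W1, Fid2; apply weq_idm.
  - rewrite cmp_assoc, W1, Fid1; reflexivity.
Qed.

Lemma rel_cylinder_ex {A B : Ob C} (i : Hom A B) : cof i ->
  exists (P : Ob C) (in1 in2 : Hom B P) (I : Ob C) (c : Hom P I) (s : Hom I B),
    is_pushout i i in1 in2 /\ cof c /\ weq s /\
    cmp s (cmp c in1) = idm B /\ cmp s (cmp c in2) = idm B.
Proof.
  intros Hi. destruct (pushout_ex (i:=i) i Hi) as [P [in1 [in2 Hpo]]].
  destruct (proj2 Hpo B (idm B) (idm B) eq_refl) as [nabla [N1 [N2 _]]].
  destruct (factor_cof_weq nabla) as [I [c [s [Hc [Hs E]]]]].
  exists P, in1, in2, I, c, s.
  split; [exact Hpo|]; do 2 (split; [assumption|]).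
  split; rewrite cmp_assoc, E; assumption.
Qed.

Lemma cof_retraction {X Y Z : Ob C} (j : Hom X Y) (t : Hom Y Z) :
  cof j -> weq (cmp t j) -> exists r : Hom Y X, cmp r j = idm X.
Proof.
  intros Hj Htj. destruct (factor_cof_weq t) as [M [k [w [Hk [Hw E]]]]].
  destruct (tcof_retract (f := cmp k j)) as [r Hr].
  - apply cof_cmp; auto.
  - apply (weq_from_cmp_l w); auto. rewrite cmp_assoc, E; auto.
  - exists (cmp r k). rewrite <- cmp_assoc; exact Hr.
Qed.

End CylinderFacts.

Section Homotopies.
Variable C : CylCat.

Lemma rel_htpy_on_cylinder {A B X : Ob C} {i : Hom A B} {f g : Hom B X} :
  rel_htpy i f g ->
  forall (P : Ob C) (in1 in2 : Hom B P) (I : Ob C) (c : Hom P I) (s : Hom I B),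
  is_pushout i i in1 in2 -> cof c ->
  cmp s (cmp c in1) = idm B -> cmp s (cmp c in2) = idm B ->
  exists H : Hom I X, cmp H (cmp c in1) = f /\ cmp H (cmp c in2) = g.
Proof.
  intros [_ [P1 [j1 [j2 [J [c1 [s1 [H [Hpo1 [_ [Hs1 [e1 [e2 [h1 h2]]]]]]]]]]]]]]
    P in1 in2 I c s Hpo Hc E1 E2.
  destruct (proj2 Hpo P1 j1 j2 (proj1 Hpo1)) as [phi [F1 [F2 _]]].
  destruct (pushout_ex (i:=c) (cmp c1 phi) Hc) as [K [kJ [kI HpoK]]].
  destruct (proj2 HpoK B s1 s) as [t [T1 [T2 _]]].
  { apply (pushout_hom_ext Hpo); rewrite <- !cmp_assoc.
    - rewrite F1, e1, E1; reflexivity.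
    - rewrite F2, e2, E2; reflexivity. }
  destruct (cof_retraction C kJ t (pushout_cof Hc HpoK)) as [r Hr].
  { rewrite T1; exact Hs1. }
  assert (Hglue : forall (jk : Hom B P1) (ink : Hom B P), cmp phi ink = jk ->
            cmp (cmp H (cmp r kI)) (cmp c ink) = cmp H (cmp c1 jk)).
  { intros jk ink Hk.
    rewrite <- !cmp_assoc, (cmp_assoc kI c ink), <- (proj1 HpoK), <- !cmp_assoc, Hk.
    rewrite (cmp_assoc r kJ), Hr, cmp_id_l; reflexivity. }
  exists (cmp H (cmp r kI)).
  split; [rewrite (Hglue j1 in1 F1), h1 | rewrite (Hglue j2 in2 F2), h2]; reflexivity.
Qed.

(* The relative cylinder for j is P +_X P glued to a relative cylinder for i along
   B +_A B -> P +_X P; its map to P need not be a weak equivalence. *)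
Lemma rel_htpy_pushout {A B X P Z : Ob C} (i : Hom A B) (x : Hom A X) (j : Hom X P)
  (g : Hom B P) (f1 f2 : Hom P Z) :
  cof i -> is_pushout i x j g -> rel_htpy j f1 f2 -> rel_htpy i (cmp f1 g) (cmp f2 g).
Proof.
  intros Hi Hpo Hh.
  assert (Hj : cof j) by exact (pushout_cof Hi Hpo).
  destruct (rel_cylinder_ex C i Hi) as [QB [qb1 [qb2 [I [c [s [HpoB [Hc [Hs [s1 s2]]]]]]]]]].
  destruct (pushout_ex (i:=j) j Hj) as [QP [qp1 [qp2 HpoP]]].
  destruct (proj2 HpoB QP (cmp qp1 g) (cmp qp2 g)) as [gam [G1 [G2 _]]].
  { rewrite <- !cmp_assoc, <- (proj1 Hpo), !cmp_assoc, (proj1 HpoP); reflexivity. }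
  destruct (pushout_ex (i:=c) gam Hc) as [K [kq [kI HpoK]]].
  destruct (proj2 HpoP P (idm P) (idm P) eq_refl) as [nabla [N1 [N2 _]]].
  destruct (proj2 HpoK P nabla (cmp g s)) as [t [T1 [T2 _]]].
  { apply (pushout_hom_ext HpoB); rewrite <- !cmp_assoc.
    - rewrite G1, s1, cmp_id_r, cmp_assoc, N1, cmp_id_l; reflexivity.
    - rewrite G2, s2, cmp_id_r, cmp_assoc, N2, cmp_id_l; reflexivity. }
  destruct (rel_htpy_on_cylinder Hh _ _ _ _ _ t HpoP (pushout_cof Hc HpoK))
    as [Hm [Hm1 Hm2]].
  { rewrite cmp_assoc, T1, N1; reflexivity. }
  { rewrite cmp_assoc, T1, N2; reflexivity. }
  split.
  { rewrite <- !cmp_assoc, <- (proj1 Hpo), !cmp_assoc, (proj1 Hh); reflexivity. }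
  exists QB, qb1, qb2, I, c, s, (cmp Hm kI).
  split; [exact HpoB|]; split; [exact Hc|]; split; [exact Hs|].
  split; [exact s1|]; split; [exact s2|].
  split.
  - rewrite <- Hm1, <- !cmp_assoc, (cmp_assoc kI c), <- (proj1 HpoK), <- cmp_assoc, G1; reflexivity.
  - rewrite <- Hm2, <- !cmp_assoc, (cmp_assoc kI c), <- (proj1 HpoK), <- cmp_assoc, G2; reflexivity.
Qed.

End Homotopies.

Section CosliceHomotopy.
Variables (C : CylCat) (A : Ob C).

Lemma coslice_pushout {X0 B X P : CsOb C A} {i : CsHom C A X0 B} {x : CsHom C A X0 X}
  {j : CsHom C A X P} {g : CsHom C A B P} :
  is_pushout (cs_mor i) (cs_mor x) (cs_mor j) (cs_mor g) ->
  is_pushout (C := coslice C A) i x j g.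
Proof.
  intros [Hc Hu]. split; [apply CsHom_eq; exact Hc|].
  intros Q u w Huw.
  destruct (Hu (cs_tgt Q) (cs_mor u) (cs_mor w) (f_equal (@cs_mor _ _ _ _) Huw))
    as [h [H1 [H2 Hh]]].
  assert (Eh : cmp h (cs_str P) = cs_str Q).
  { rewrite <- (cs_comm j), cmp_assoc, H1; apply cs_comm. }
  exists (Build_CsHom (X := P) (Y := Q) Eh).
  split; [apply CsHom_eq; exact H1|]; split; [apply CsHom_eq; exact H2|].
  intros h' H1' H2'. apply CsHom_eq, Hh.
  - exact (f_equal (@cs_mor _ _ _ _) H1').
  - exact (f_equal (@cs_mor _ _ _ _) H2').
Qed.

Lemma coslice_iso {X Y : CsOb C A} {f : CsHom C A X Y} :
  is_iso (C := coslice C A) f -> is_iso (cs_mor f).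
Proof.
  intros [g [G1 G2]]. exists (cs_mor g).
  split; [exact (f_equal (@cs_mor _ _ _ _) G1) | exact (f_equal (@cs_mor _ _ _ _) G2)].
Qed.

Lemma coslice_initial (O : CsOb C A) : is_iso (cs_str O) -> is_initial (C := coslice C A) O.
Proof.
  intros [g [G1 G2]] Z.
  assert (E : cmp (cmp (cs_str Z) g) (cs_str O) = cs_str Z)
    by (rewrite <- cmp_assoc, G1, cmp_id_r; reflexivity).
  exists (Build_CsHom (X := O) (Y := Z) E).
  intros h. apply CsHom_eq; simpl.
  rewrite <- (cs_comm h), <- cmp_assoc, G2, cmp_id_r; reflexivity.
Qed.

Definition cs_base : CsOb C A := Build_CsOb (cof_iso (is_iso_idm A)).

Definition cs_str_hom (B : CsOb C A) : CsHom C A cs_base B :=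
  Build_CsHom (X := cs_base) (Y := B) (cs_mor := cs_str B) (cmp_id_r _).

Lemma rel_htpy_coslice {X0 B X : CsOb C A} (i : CsHom C A X0 B) (f g : CsHom C A B X) :
  cof (cs_mor i) -> rel_htpy (cs_mor i) (cs_mor f) (cs_mor g) ->
  rel_htpy (C := coslice C A) i f g.
Proof.
  intros Hi [Hfg [P [in1 [in2 [I [c [s [H [Hpo [Hc [Hs [e1 [e2 [h1 h2]]]]]]]]]]]]]].
  pose (Pc := Build_CsOb (cof_cmp (cs_cof B) (pushout_cof Hi Hpo))).
  pose (Ic := Build_CsOb (cof_cmp (cs_cof Pc) Hc)).
  assert (E2 : cmp in2 (cs_str B) = cs_str Pc).
  { simpl; rewrite <- (cs_comm i), !cmp_assoc, (proj1 Hpo); reflexivity. }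
  assert (Es : cmp s (cs_str Ic) = cs_str B).
  { simpl; rewrite (cmp_assoc c in1), cmp_assoc, e1, cmp_id_l; reflexivity. }
  assert (EH : cmp H (cs_str Ic) = cs_str X).
  { simpl; rewrite (cmp_assoc c in1), cmp_assoc, h1; apply cs_comm. }
  split; [apply CsHom_eq; exact Hfg|].
  exists Pc, (Build_CsHom (X := B) (Y := Pc) (cs_mor := in1) eq_refl),
    (Build_CsHom (X := B) (Y := Pc) E2), Ic,
    (Build_CsHom (X := Pc) (Y := Ic) (cs_mor := c) eq_refl),
    (Build_CsHom (X := Ic) (Y := B) Es), (Build_CsHom (X := Ic) (Y := X) EH).
  split; [apply coslice_pushout; exact Hpo|]; split; [exact Hc|]; split; [exact Hs|].
  repeat split; apply CsHom_eq; assumption.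
Qed.

Lemma htpy_coslice_rel_htpy {B X : CsOb C A} (f g : CsHom C A B X) :
  htpy (C := coslice C A) f g -> rel_htpy (cs_str B) (cs_mor f) (cs_mor g).
Proof.
  intros [O [o [HO [_ [Pc [in1 [in2 [I [c [s [H [Hpo [Hc [Hs [e1 [e2 [h1 h2]]]]]]]]]]]]]]]]].
  split; [rewrite (cs_comm f), (cs_comm g); reflexivity|].
  destruct (pushout_ex (i := cs_str B) (cs_str B) (cs_cof B)) as [P [a [b HpoP]]].
  pose (PB := Build_CsOb (cof_cmp (cs_cof B) (pushout_cof (cs_cof B) HpoP))).
  assert (Eb : cmp b (cs_str B) = cs_str PB) by exact (eq_sym (proj1 HpoP)).
  assert (HcopB : is_coproduct (C := coslice C A)
                    (Build_CsHom (X := B) (Y := PB) (cs_mor := a) eq_refl)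
                    (Build_CsHom (X := B) (Y := PB) Eb)).
  { apply (pushout_initial_coproduct (K := coslice C A)
             (i := cs_str_hom B) (f := cs_str_hom B)).
    - apply coslice_initial, is_iso_idm.
    - apply coslice_pushout; exact HpoP. }
  destruct (coproduct_unique_iso HcopB (pushout_initial_coproduct HO Hpo))
    as [psi [Hpsi [Psi1 Psi2]]].
  apply (f_equal (@cs_mor _ _ _ _)) in Psi1, Psi2, e1, e2, h1, h2.
  exists P, a, b, (cs_tgt I), (cmp (cs_mor c) (cs_mor psi)), (cs_mor s), (cs_mor H).
  split; [exact HpoP|].
  split; [exact (cof_cmp (cof_iso (coslice_iso Hpsi)) Hc)|].
  split; [exact Hs|].
  simpl in *; rewrite <- !cmp_assoc, Psi1, Psi2; repeat split; assumption.
Qed.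

Lemma coslice_htpy_iff {B X : CsOb C A} (f g : CsHom C A B X) :
  htpy (C := coslice C A) f g <-> rel_htpy (cs_str B) (cs_mor f) (cs_mor g).
Proof.
  split; [apply htpy_coslice_rel_htpy|].
  intros Hfg. exists cs_base, (cs_str_hom B).
  split; [apply coslice_initial, is_iso_idm|].
  exact (rel_htpy_coslice (cs_str_hom B) f g (cs_cof B) Hfg).
Qed.

End CosliceHomotopy.

Section HomotopyFullyFaithful.
Variables (C D : CylCat) (F : CylMor C D).

Lemma htpy_ff_coslice :
  htpy_fully_faithful F -> forall A, htpy_fully_faithful (F_A F A).
Proof.
  intros HF A A' B X i x v Hi Hv.
  destruct (HF _ _ _ (cs_mor i) (cs_mor x) (cs_mor v) Hi (f_equal (@cs_mor _ _ _ _) Hv))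
    as [v' [Hv'i Hv'v]].
  assert (Ev' : cmp v' (cs_str B) = cs_str X).
  { rewrite <- (cs_comm i), cmp_assoc, Hv'i; apply cs_comm. }
  exists (Build_CsHom (X := B) (Y := X) Ev'). split; [apply CsHom_eq; exact Hv'i|].
  apply rel_htpy_coslice; [apply pres_cof; exact Hi | exact Hv'v].
Qed.

Lemma coslice_htpy_ff_h_full :
  (forall A, htpy_fully_faithful (F_A F A)) -> forall A, h_full (F_A F A).
Proof.
  intros HF A X Y v.
  destruct (HF A (cs_base C A) X Y (cs_str_hom C A X) (cs_str_hom C A Y) v (cs_cof X))
    as [v' [_ Hv']].
  { apply CsHom_eq; exact (cs_comm v). }
  exists v', (FA_obj F (cs_base C A)), (fmap (F_A F A) (cs_str_hom C A X)).
  split; [|exact Hv'].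
  apply coslice_initial; simpl; rewrite fmap_id; apply is_iso_idm.
Qed.

Lemma coslice_h_full_htpy_ff :
  (forall A, h_full (F_A F A)) -> htpy_fully_faithful F.
Proof.
  intros HF A B X i x v Hi Hv.
  destruct (pushout_ex (i := i) x Hi) as [P [j [g Hpo]]].
  pose proof (pres_pushout F Hi Hpo) as HpoF.
  destruct (proj2 HpoF (F X) (idm (F X)) v) as [w [W1 W2]].
  { rewrite cmp_id_l; exact (eq_sym Hv). }
  pose (PX := Build_CsOb (pushout_cof Hi Hpo)).
  assert (Ew : cmp w (cs_str (FA_obj F PX)) = cs_str (FA_obj F (cs_base C X))).
  { simpl; rewrite W1, fmap_id; reflexivity. }
  destruct (HF X PX (cs_base C X)
              (Build_CsHom (X := FA_obj F PX) (Y := FA_obj F (cs_base C X)) Ew)) as [f Hf].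
  apply htpy_coslice_rel_htpy in Hf; simpl in Hf.
  exists (cmp (cs_mor f) g). split.
  - rewrite <- cmp_assoc; simpl; rewrite <- (proj1 Hpo), cmp_assoc.
    change (cmp (cmp (cs_mor f) (cs_str PX)) x = x); rewrite (cs_comm f); apply cmp_id_l.
  - rewrite fmap_cmp, <- (proj1 W2).
    exact (rel_htpy_pushout D _ _ _ _ _ _ (pres_cof F Hi) HpoF Hf).
Qed.

Lemma htpy_ff_coslice_h_faithful :
  htpy_fully_faithful F -> forall A, h_faithful (F_A F A).
Proof.
  intros HF A B X f g Hfg.
  apply htpy_coslice_rel_htpy in Hfg; simpl in Hfg.
  destruct (rel_cylinder_ex C (cs_str B) (cs_cof B))
    as [P [in1 [in2 [I [k [s [Hpo [Hk [Hs [E1 E2]]]]]]]]]].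
  destruct (rel_htpy_on_cylinder D Hfg _ _ _ _ _ (fmap F s) (pres_pushout F (cs_cof B) Hpo)
              (pres_cof F Hk)) as [G [G1 G2]].
  { rewrite <- !fmap_cmp, E1, fmap_id; reflexivity. }
  { rewrite <- !fmap_cmp, E2, fmap_id; reflexivity. }
  destruct (proj2 Hpo (cs_tgt X) (cs_mor f) (cs_mor g)) as [fg [FG1 [FG2 _]]].
  { rewrite (cs_comm f), (cs_comm g); reflexivity. }
  destruct (HF _ _ _ k fg G Hk) as [H [Hk' _]].
  { apply (pushout_hom_ext (pres_pushout F (cs_cof B) Hpo)); rewrite <- cmp_assoc.
    - rewrite G1, <- fmap_cmp, FG1; reflexivity.
    - rewrite G2, <- fmap_cmp, FG2; reflexivity. }
  apply coslice_htpy_iff.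
  split; [rewrite (cs_comm f), (cs_comm g); reflexivity|].
  exists P, in1, in2, I, k, s, H.
  split; [exact Hpo|]; split; [exact Hk|]; split; [exact Hs|].
  split; [exact E1|]; split; [exact E2|].
  split; rewrite cmp_assoc, Hk'; assumption.
Qed.

End HomotopyFullyFaithful.

Theorem mainTheorem2 (C D : CylCat) (F : CylMor C D) :
  (htpy_fully_faithful F <-> forall A : Ob C, h_full (F_A F A)) /\
  (htpy_fully_faithful F <-> forall A : Ob C, htpy_fully_faithful (F_A F A)) /\
  (htpy_fully_faithful F <->
     forall A : Ob C, h_full (F_A F A) /\ h_faithful (F_A F A)).
Proof.
  pose proof (htpy_ff_coslice C D F) as to_coslice.
  pose proof (coslice_htpy_ff_h_full C D F) as coslice_to_full.
  pose proof (coslice_h_full_htpy_ff C D F) as of_full.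
  pose proof (htpy_ff_coslice_h_faithful C D F) as to_faithful.
  split; [|split]; split; intros H.
  - exact (coslice_to_full (to_coslice H)).
  - exact (of_full H).
  - exact (to_coslice H).
  - exact (of_full (coslice_to_full H)).
  - intros A; exact (conj (coslice_to_full (to_coslice H) A) (to_faithful H A)).
  - apply of_full; intros A; exact (proj1 (H A)).
Qed.
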